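(* Let $N$ be an integer and $L$ a positive integer, and let $f$ be a real-valued function with two continuous derivatives on $[N+1, N+L]$. Suppose there exist real numbers $V < W$ with $W > 1$ such that $$\frac{1}{W} \leq |f''(x)| \leq \frac{1}{V} \quad \text{for all } x \in [N+1, N+L].$$ Then $$\left|\sum_{n=N+1}^{N+L} e^{2\pi i f(n)}\right| \leq \left(\frac{L-1}{V} + 1\right)\left(2\sqrt{\frac{2}{\pi}}\, W^{1/2} + 2\right) + 1.$$ *)

From Stdlib Require Import Reals Lra Lia.
Open Scope R_scope.

Definition Icc (a b : R) (x : R) : Prop := a <= x <= b.

(* derivative of f at x relative to the set D (one-sided at endpoints of an interval) *)
Definition has_deriv_within (D : R -> Prop) (f : R -> R) (x l : R) : Prop :=
  forall eps : R, 0 < eps -> exists delta : R, 0 < delta /\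
    forall h : R, h <> 0 -> Rabs h < delta -> D (x + h) ->
      Rabs ((f (x + h) - f x) / h - l) < eps.

Definition C2_on (a b : R) (f f1 f2 : R -> R) : Prop :=
  (forall x, Icc a b x -> has_deriv_within (Icc a b) f x (f1 x)) /\
  (forall x, Icc a b x -> has_deriv_within (Icc a b) f1 x (f2 x)) /\
  (forall x, Icc a b x -> limit1_in f2 (Icc a b) (f2 x) x).

Definition cmod (re im : R) : R := sqrt (re ^ 2 + im ^ 2).

(* | sum_{n=N+1}^{N+L} e^{2 pi i f(n)} |, written with cos/sin *)
Definition exp_sum_abs (f : R -> R) (N : Z) (L : nat) : R :=
  cmod (sum_f_R0 (fun k => cos (2 * PI * f (IZR N + 1 + INR k))) (L - 1))
       (sum_f_R0 (fun k => sin (2 * PI * f (IZR N + 1 + INR k))) (L - 1)).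

From Stdlib Require Import Reals Lra Lia ZArith.
From Coquelicot Require Import Coquelicot.
Open Scope R_scope.

(* A sharp form of van der Corput's second-derivative test.
   With a_k = f(N+1+k) and theta_k = a_(k+1) - a_k, the mean value theorem puts the
   second differences of a in [1/W, 1/V] (replace f by -f if f'' < 0: this conjugates
   the sum), so the theta_k are (1/W)-spaced and sweep a range at most (L-2)/V.
   Abel summation with real weights v_k gives
     sum e(a_k) = (e(a_0) + e(a_n))/2 + sum P_k - i sum v_k (e(a_(k+1)) - e(a_k)),
   |P_k| = |cos(pi theta_k) - 2 v_k sin(pi theta_k)|.  With v_k = cot(pi theta_k)/2
   truncated to [-A, A], A = 1/(2 pi tau), each |P_k| is dominated by two tents of
   width tau at the ends of [0,1), evaluated at {theta_k}; spacing bounds their sum by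
   telescoping.  The last sum is summed by parts: the weight is monotone on each unit
   cell, so its variation is at most 4A per unit of range.  tau = sqrt(2/pi)/sqrt W
   balances the two contributions.
   Order of the file: trigonometric facts, the weight and its defect, tent counting,
   variation of the weights, Abel summation, the discrete estimate, the calculus
   transferring bounds on f'' to second differences, and the theorem. *)

Fixpoint rsum (u : nat -> R) (n : nat) : R :=
  match n with O => 0 | S m => rsum u m + u m end.

Lemma rsum_le (u w : nat -> R) n :
  (forall k, (k < n)%nat -> u k <= w k) -> rsum u n <= rsum w n.
Proof.
  induction n as [|n IH]; intros H; simpl; [lra|].
  pose proof (H n ltac:(lia)). pose proof (IH (fun k Hk => H k ltac:(lia))). lra.
Qed.

Lemma rsum_plus (u w : nat -> R) n : rsum (fun k => u k + w k) n = rsum u n + rsum w n.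
Proof. induction n as [|n IH]; simpl; [ring|]. rewrite IH. ring. Qed.

Lemma rsum_sum_f_R0 (u : nat -> R) n : rsum u (S n) = sum_f_R0 u n.
Proof.
  induction n as [|n IH]; [simpl; ring|].
  change (rsum u (S (S n))) with (rsum u (S n) + u (S n)). rewrite IH. reflexivity.
Qed.

Definition clamp (lo hi z : R) : R := Rmax lo (Rmin hi z).

Lemma clamp_in lo hi z : lo <= hi -> lo <= clamp lo hi z <= hi.
Proof. intros. unfold clamp. split; [apply Rmax_l|]. apply Rmax_lub; [lra|apply Rmin_l]. Qed.

Lemma clamp_id lo hi z : lo <= z <= hi -> clamp lo hi z = z.
Proof. intros. unfold clamp. rewrite Rmin_right, Rmax_right by lra. reflexivity. Qed.

Lemma clamp_dist lo hi z c : lo <= c <= hi -> Rabs (clamp lo hi z - c) <= Rabs (z - c).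
Proof.
  intros Hc. unfold clamp.
  destruct (Rle_dec z hi); [rewrite Rmin_right by lra|rewrite Rmin_left by lra];
  (destruct (Rle_dec lo z); [rewrite Rmax_right by lra|rewrite Rmax_left by lra]);
  unfold Rabs; repeat destruct Rcase_abs; lra.
Qed.

Lemma clamp_le lo hi z z' : z <= z' -> clamp lo hi z <= clamp lo hi z'.
Proof. intros. unfold clamp. apply Rle_max_compat_l, Rle_min_compat_l. exact H. Qed.

(* x cos x <= sin x on [0, pi/2]: the derivative of sin x - x cos x is x sin x >= 0. *)
Lemma x_cos_le_sin x : 0 <= x <= PI/2 -> x * cos x <= sin x.
Proof.
  intros [H0 H1].
  destruct (MVT_gen (fun y => sin y - y * cos y) 0 x (fun y => y * sin y)) as [c [Hc Hd]].
  - intros y _. auto_derive; auto. ring.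
  - intros y _. apply derivable_continuous_pt.
    apply derivable_pt_minus; [apply derivable_pt_sin|].
    apply derivable_pt_mult; [apply derivable_pt_id|apply derivable_pt_cos].
  - rewrite Rmin_left, Rmax_right in Hc by lra. rewrite sin_0, cos_0 in Hd.
    assert (Hs : 0 <= sin c).
    { destruct (Req_dec c 0) as [->|]; [rewrite sin_0; lra|].
      left; apply sin_gt_0; pose proof PI2_Rlt_PI; lra. }
    assert (0 <= c * sin c * (x - 0)) by (apply Rmult_le_pos; [apply Rmult_le_pos|]; lra).
    lra.
Qed.

Lemma cot_antitone x y : 0 < x -> x <= y -> y < PI -> cos y / sin y <= cos x / sin x.
Proof.
  intros Hx Hxy Hy.
  assert (sx : 0 < sin x) by (apply sin_gt_0; lra).
  assert (sy : 0 < sin y) by (apply sin_gt_0; lra).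
  assert (Hd : 0 <= sin (y - x)).
  { destruct (Req_dec y x) as [->|]; [rewrite Rminus_diag, sin_0; lra|].
    left; apply sin_gt_0; lra. }
  rewrite sin_minus in Hd.
  unfold Rdiv. apply Rmult_le_reg_r with (sin x * sin y); [nra|].
  replace (cos y * / sin y * (sin x * sin y)) with (cos y * sin x) by (field; lra).
  replace (cos x * / sin x * (sin x * sin y)) with (cos x * sin y) by (field; lra).
  lra.
Qed.

Lemma trig_shift_nat (k : nat) x :
  (cos (x + INR k * PI) = cos x /\ sin (x + INR k * PI) = sin x) \/
  (cos (x + INR k * PI) = - cos x /\ sin (x + INR k * PI) = - sin x).
Proof.
  induction k as [|k IH].
  - left. simpl. rewrite Rmult_0_l, Rplus_0_r. auto.
  - rewrite S_INR. replace (x + (INR k + 1) * PI) with ((x + INR k * PI) + PI) by ring.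
    rewrite neg_cos, neg_sin. destruct IH as [[-> ->]|[-> ->]].
    + right; auto.
    + left; split; ring.
Qed.

Lemma trig_shift (m : Z) x : exists s, Rabs s = 1 /\
  cos (x + IZR m * PI) = s * cos x /\ sin (x + IZR m * PI) = s * sin x.
Proof.
  destruct (Z_le_gt_dec 0 m) as [Hm|Hm].
  - rewrite <- (Z2Nat.id m), <- INR_IZR_INZ by lia.
    destruct (trig_shift_nat (Z.to_nat m) x) as [[-> ->]|[-> ->]].
    + exists 1. rewrite Rabs_R1. split; [|split]; ring.
    + exists (-1). split; [rewrite Rabs_left; lra|split; ring].
  - set (k := Z.to_nat (- m)).
    assert (E : IZR m = - INR k).
    { unfold k. rewrite INR_IZR_INZ, Z2Nat.id, opp_IZR by lia. ring. }
    rewrite E.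
    destruct (trig_shift_nat k (x + - INR k * PI)) as [[H1 H2]|[H1 H2]];
      replace (x + - INR k * PI + INR k * PI) with x in H1, H2 by ring.
    + exists 1. rewrite Rabs_R1. lra.
    + exists (-1). split; [rewrite Rabs_left|]; lra.
Qed.

(* The weight paired with an increment theta of fractional part t: cot(pi t)/2,
   truncated to [-A, A] (and A at t = 0, where the cotangent blows up). *)
Definition cot_weight (A t : R) : R :=
  if Req_EM_T t 0 then A else clamp (-A) A (cos (PI * t) / (2 * sin (PI * t))).

(* Tents of height 1 and width tau at the right end and the left end of [0, 1). *)
Definition tent_left (tau t : R) : R := if Rle_dec t (1 - tau) then 0 else 1 - (1 - t) / tau.
Definition tent_right (tau t : R) : R := if Rle_dec t tau then 1 - t / tau else 0.

Lemma tent_left_ge tau t : 0 < tau -> t <= 1 -> Rmax 0 (1 - (1 - t) / tau) <= tent_left tau t.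
Proof.
  intros Htau Ht. unfold tent_left. apply Rmax_lub; destruct Rle_dec as [H|H]; try lra.
  - enough ((1 - t) / tau <= 1) by lra.
    apply Rmult_le_reg_r with tau; [lra|]. unfold Rdiv. rewrite Rmult_assoc, Rinv_l; lra.
  - enough (1 <= (1 - t) / tau) by lra.
    apply Rmult_le_reg_r with tau; [lra|]. unfold Rdiv. rewrite Rmult_assoc, Rinv_l; lra.
Qed.

Lemma tent_right_ge tau t : 0 < tau -> 0 <= t -> Rmax 0 (1 - t / tau) <= tent_right tau t.
Proof.
  intros Htau Ht. unfold tent_right. apply Rmax_lub; destruct Rle_dec as [H|H]; try lra.
  - enough (t / tau <= 1) by lra.
    apply Rmult_le_reg_r with tau; [lra|]. unfold Rdiv. rewrite Rmult_assoc, Rinv_l; lra.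
  - enough (1 <= t / tau) by lra.
    apply Rmult_le_reg_r with tau; [lra|]. unfold Rdiv. rewrite Rmult_assoc, Rinv_l; lra.
Qed.

(* If cot x / 2 exceeds A then, since x cot x <= 1, the defect cos x - 2 A sin x
   is below the tent value 1 - 2 A x. *)
Lemma defect_below_tent A x : 0 < x <= PI/2 -> 0 < A -> cos x > 2 * A * sin x ->
  cos x - 2 * A * sin x <= 1 - 2 * A * x.
Proof.
  intros Hx HA Hc.
  assert (Hs : 0 < sin x) by (apply sin_gt_0; pose proof PI2_Rlt_PI; lra).
  assert (Hxc := x_cos_le_sin x ltac:(lra)).
  assert (Hc1 : cos x <= 1) by apply COS_bound.
  destruct (Rle_dec x (sin x)); [nra|].
  assert (2 * A * (x - sin x) * sin x <= (1 - cos x) * sin x) by nra.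
  assert (2 * A * (x - sin x) <= 1 - cos x) by (apply Rmult_le_reg_r with (sin x); auto).
  lra.
Qed.

Lemma clamp_opp A z : 0 <= A -> clamp (-A) A (- z) = - clamp (-A) A z.
Proof. intros. unfold clamp, Rmax, Rmin. repeat destruct Rle_dec; lra. Qed.

Lemma half_defect A x : 0 < x <= PI/2 -> 0 < A ->
  Rabs (cos x - 2 * clamp (-A) A (cos x / (2 * sin x)) * sin x) <= Rmax 0 (1 - 2 * A * x).
Proof.
  intros Hx HA.
  assert (Hs : 0 < sin x) by (apply sin_gt_0; pose proof PI2_Rlt_PI; lra).
  assert (Hc : 0 <= cos x) by (apply cos_ge_0; lra).
  assert (Hq : 0 <= cos x / (2 * sin x)) by (apply Rdiv_le_0_compat; lra).
  destruct (Rle_dec (cos x / (2 * sin x)) A) as [HqA|HqA].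
  - rewrite clamp_id by lra.
    replace (cos x - 2 * (cos x / (2 * sin x)) * sin x) with 0 by (field; lra).
    rewrite Rabs_R0. apply Rmax_l.
  - unfold clamp. rewrite Rmin_left, Rmax_right by lra.
    assert (Hgt : cos x > 2 * A * sin x).
    { apply Rnot_le_lt in HqA.
      apply Rmult_lt_compat_r with (r := 2 * sin x) in HqA; [|lra].
      unfold Rdiv in HqA. rewrite Rmult_assoc, Rinv_l in HqA by lra. lra. }
    rewrite Rabs_right by lra.
    eapply Rle_trans; [apply defect_below_tent; auto|apply Rmax_r].
Qed.

Lemma weight_defect_frac tau t : 0 < tau -> 0 <= t < 1 ->
  Rabs (cos (PI * t) - 2 * cot_weight (/ (2 * PI * tau)) t * sin (PI * t))
  <= tent_left tau t + tent_right tau t.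
Proof.
  intros Htau Ht. pose proof PI_RGT_0 as Hpi. set (A := / (2 * PI * tau)).
  assert (HA : 0 < A) by (unfold A; apply Rinv_0_lt_compat; nra).
  assert (E2A : forall u, 2 * A * (PI * u) = u / tau) by (intro u; unfold A; field; lra).
  pose proof (tent_left_ge tau t Htau ltac:(lra)) as TL.
  pose proof (tent_right_ge tau t Htau ltac:(lra)) as TR.
  pose proof (Rmax_l 0 (1 - (1 - t) / tau)). pose proof (Rmax_l 0 (1 - t / tau)).
  unfold cot_weight. destruct (Req_EM_T t 0) as [->|Ht0].
  - rewrite Rmult_0_r, sin_0, cos_0, Rmult_0_r, Rminus_0_r, Rabs_R1.
    pose proof (Rmax_r 0 (1 - 0 / tau)). unfold Rdiv in *. lra.
  - destruct (Rle_dec t (1/2)) as [Hh|Hh].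
    + pose proof (half_defect A (PI * t) ltac:(split; nra) HA) as D.
      rewrite E2A in D. lra.
    + set (y := PI * (1 - t)).
      assert (Ec : cos (PI * t) = - cos y).
      { unfold y. replace (PI * (1 - t)) with (PI - PI * t) by ring.
        rewrite cos_minus, cos_PI, sin_PI. ring. }
      assert (Es : sin (PI * t) = sin y).
      { unfold y. replace (PI * (1 - t)) with (PI - PI * t) by ring.
        rewrite sin_minus, cos_PI, sin_PI. ring. }
      pose proof (half_defect A y ltac:(unfold y; split; nra) HA) as D.
      unfold y in D. rewrite E2A in D. fold y in D.
      rewrite Ec, Es. unfold Rdiv at 1. rewrite <- Ropp_mult_distr_l, clamp_opp by lra.
      replace (- cos y - 2 * - clamp (- A) A (cos y * / (2 * sin y)) * sin y)
        with (- (cos y - 2 * clamp (- A) A (cos y / (2 * sin y)) * sin y)) by (unfold Rdiv; ring).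
      rewrite Rabs_Ropp. lra.
Qed.

(* The same bound for an arbitrary increment theta, via its fractional part:
   shifting theta by an integer changes cos and sin of pi theta by a common sign. *)
Lemma weight_defect tau th : 0 < tau ->
  Rabs (cos (PI * th) - 2 * cot_weight (/ (2 * PI * tau)) (frac_part th) * sin (PI * th))
  <= tent_left tau (frac_part th) + tent_right tau (frac_part th).
Proof.
  intros Htau. pose proof (base_fp th) as [F1 F2].
  destruct (trig_shift (Int_part th) (PI * frac_part th)) as [s [Hs [Hc Hsn]]].
  replace (PI * frac_part th + IZR (Int_part th) * PI) with (PI * th) in Hc, Hsn
    by (unfold frac_part; ring).
  rewrite Hc, Hsn.
  set (w := cot_weight (/ (2 * PI * tau)) (frac_part th)).
  replace (s * cos (PI * frac_part th) - 2 * w * (s * sin (PI * frac_part th)))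
    with (s * (cos (PI * frac_part th) - 2 * w * sin (PI * frac_part th))) by ring.
  rewrite Rabs_mult, Hs, Rmult_1_l. apply weight_defect_frac; lra.
Qed.

Lemma cot_weight_bound A t : 0 <= A -> Rabs (cot_weight A t) <= A.
Proof.
  intros HA. unfold cot_weight. destruct Req_EM_T; [rewrite Rabs_right; lra|].
  apply Rabs_le, clamp_in. lra.
Qed.

Lemma cot_weight_nonneg A t : 0 <= A -> 0 <= t <= 1/2 -> 0 <= cot_weight A t.
Proof.
  intros HA Ht. unfold cot_weight. destruct Req_EM_T; [lra|].
  assert (Hs : 0 < sin (PI * t)) by (apply sin_gt_0; pose proof PI_RGT_0; nra).
  assert (Hc : 0 <= cos (PI * t)) by (apply cos_ge_0; pose proof PI_RGT_0; nra).
  rewrite <- (clamp_id (-A) A 0) by lra.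
  apply clamp_le, Rdiv_le_0_compat; lra.
Qed.

Lemma cot_weight_nonpos A t : 0 <= A -> 1/2 <= t < 1 -> cot_weight A t <= 0.
Proof.
  intros HA Ht. unfold cot_weight. destruct Req_EM_T; [lra|].
  assert (Hs : 0 < sin (PI * t)) by (apply sin_gt_0; pose proof PI_RGT_0; nra).
  assert (Hc : cos (PI * t) <= 0) by (apply cos_le_0; pose proof PI_RGT_0; nra).
  rewrite <- (clamp_id (-A) A 0) by lra. apply clamp_le.
  unfold Rdiv. assert (0 < / (2 * sin (PI * t))) by (apply Rinv_0_lt_compat; lra). nra.
Qed.

(* The weight is nonincreasing on [0, 1), as the cotangent is on (0, pi). *)
Lemma cot_weight_antitone A s t : 0 <= A -> 0 <= s <= t -> t < 1 ->
  cot_weight A t <= cot_weight A s.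
Proof.
  intros HA Hst Ht. pose proof PI_RGT_0.
  destruct (Req_EM_T s 0) as [->|Hs0].
  - unfold cot_weight at 2. destruct Req_EM_T; [|congruence].
    pose proof (cot_weight_bound A t HA) as B. apply Rabs_le_between in B. lra.
  - unfold cot_weight. destruct (Req_EM_T t 0); [lra|]. destruct (Req_EM_T s 0); [congruence|].
    apply clamp_le.
    assert (Hs : 0 < sin (PI * s)) by (apply sin_gt_0; nra).
    assert (Ht' : 0 < sin (PI * t)) by (apply sin_gt_0; nra).
    pose proof (cot_antitone (PI * s) (PI * t) ltac:(nra) ltac:(nra) ltac:(nra)).
    replace (cos (PI * t) / (2 * sin (PI * t))) with (/ 2 * (cos (PI * t) / sin (PI * t)))
      by (field; lra).
    replace (cos (PI * s) / (2 * sin (PI * s))) with (/ 2 * (cos (PI * s) / sin (PI * s)))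
      by (field; lra).
    lra.
Qed.

Lemma fp_decomp x : x = IZR (Int_part x) + frac_part x.
Proof. unfold frac_part. ring. Qed.

Lemma floor_cases x y : x <= y ->
  (Int_part x = Int_part y /\ frac_part y - frac_part x = y - x) \/
  IZR (Int_part y) - IZR (Int_part x) >= 1.
Proof.
  intros Hxy. pose proof (base_fp x). pose proof (base_fp y).
  pose proof (fp_decomp x). pose proof (fp_decomp y).
  destruct (Z.eq_dec (Int_part x) (Int_part y)) as [E|E].
  - left. split; auto. unfold frac_part. rewrite E. ring.
  - right. destruct (Z_lt_le_dec (Int_part x) (Int_part y)) as [Hl|Hl].
    + assert (IZR (Int_part x) + 1 <= IZR (Int_part y)) by (rewrite <- plus_IZR; apply IZR_le; lia).
      lra.
    + exfalso.
      assert (IZR (Int_part y) + 1 <= IZR (Int_part x)) by (rewrite <- plus_IZR; apply IZR_le; lia).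
      lra.
Qed.

(* For each tent we build a
   nondecreasing function Phi on R whose increment over [x, x + h] dominates
   h * tent({x}): on each unit cell Phi is a primitive of the tent (total mass
   tau/2), and it jumps by tau/2 + h from cell to cell, which pays for an
   h-interval straddling a cell boundary.  Hence Phi grows by at most
   (tau/2 + h) per unit length. *)
Section Tents.
Variables tau h : R.
Hypothesis Htau : 0 < tau.
Hypothesis Htau1 : tau <= 1.
Hypothesis Hh : 0 < h.

(* Primitive of tent_left on [0, 1], vanishing at 0. *)
Definition ramp_left (t : R) : R :=
  if Rle_dec t (1 - tau) then 0 else (t - (1 - tau)) ^ 2 / (2 * tau).
Definition Phi_left (x : R) : R := (tau/2 + h) * IZR (Int_part x) + ramp_left (frac_part x).

(* Primitive of tent_right on [0, 1], vanishing at 0. *)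
Definition ramp_right (t : R) : R :=
  if Rle_dec t tau then t - t ^ 2 / (2 * tau) else tau / 2.
Definition Phi_right (x : R) : R := (tau/2 + h) * IZR (Int_part x) + ramp_right (frac_part x).

Lemma ramp_left_bounds t : 0 <= t < 1 -> 0 <= ramp_left t <= tau / 2 * t.
Proof.
  intros Ht. unfold ramp_left. destruct Rle_dec; [split; nra|].
  split; [apply Rdiv_le_0_compat; nra|].
  assert (t - (1 - tau) <= tau * t) by nra.
  assert ((t - (1 - tau)) ^ 2 <= tau * tau * t) by nra.
  apply Rmult_le_reg_r with (2 * tau); [lra|].
  unfold Rdiv. rewrite Rmult_assoc, Rinv_l by lra. nra.
Qed.

Lemma ramp_left_mono s t : s <= t -> t < 1 -> ramp_left s <= ramp_left t.
Proof.
  intros Hst Ht. unfold ramp_left.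
  destruct (Rle_dec s (1 - tau)); destruct (Rle_dec t (1 - tau)); try lra.
  - apply Rdiv_le_0_compat; nra.
  - unfold Rdiv. apply Rmult_le_compat_r; [apply Rlt_le, Rinv_0_lt_compat; lra|nra].
Qed.

Lemma Phi_left_mono x y : x <= y -> Phi_left x <= Phi_left y.
Proof.
  intros Hxy. unfold Phi_left. pose proof (base_fp x). pose proof (base_fp y).
  destruct (floor_cases x y Hxy) as [[E1 E2]|E].
  - rewrite E1. pose proof (ramp_left_mono (frac_part x) (frac_part y) ltac:(lra) ltac:(lra)). lra.
  - pose proof (ramp_left_bounds (frac_part x) ltac:(lra)).
    pose proof (ramp_left_bounds (frac_part y) ltac:(lra)). nra.
Qed.

Lemma Phi_left_step x : h * tent_left tau (frac_part x) <= Phi_left (x + h) - Phi_left x.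
Proof.
  pose proof (base_fp x) as Fx. pose proof (base_fp (x + h)) as Fy.
  assert (T1 : tent_left tau (frac_part x) <= 1).
  { unfold tent_left. destruct Rle_dec; [lra|].
    assert (0 <= (1 - frac_part x) / tau) by (apply Rdiv_le_0_compat; lra). lra. }
  unfold Phi_left. destruct (floor_cases x (x + h) ltac:(lra)) as [[E1 E2]|E].
  - rewrite E1. replace (frac_part (x + h)) with (frac_part x + h) by lra.
    unfold tent_left, ramp_left. destruct (Rle_dec (frac_part x) (1 - tau)).
    + rewrite Rmult_0_r. destruct Rle_dec; [lra|]. ring_simplify. apply Rdiv_le_0_compat; nra.
    + destruct Rle_dec; [lra|].
      apply Rmult_le_reg_r with (2 * tau); [lra|].
      unfold Rdiv. field_simplify; try lra. nra.
  - pose proof (ramp_left_bounds (frac_part x) ltac:(lra)).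
    pose proof (ramp_left_bounds (frac_part (x + h)) ltac:(lra)). nra.
Qed.

Lemma Phi_left_growth x y : x <= y -> Phi_left y - Phi_left x <= (tau/2 + h) * (y - x + 1).
Proof.
  intros Hxy. unfold Phi_left. pose proof (base_fp x). pose proof (base_fp y).
  pose proof (ramp_left_bounds (frac_part x) ltac:(lra)).
  pose proof (ramp_left_bounds (frac_part y) ltac:(lra)).
  pose proof (fp_decomp x). pose proof (fp_decomp y). nra.
Qed.

Lemma ramp_right_bounds t : 0 <= t <= 1 ->
  0 <= ramp_right t /\ ramp_right t <= tau / 2 /\ tau / 2 * t <= ramp_right t.
Proof.
  intros Ht. unfold ramp_right. destruct Rle_dec; [|split; [lra|split]; nra].
  assert (E : t - t ^ 2 / (2 * tau) = t * (1 - t / (2 * tau))) by (field; lra).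
  assert (t / (2 * tau) <= 1/2).
  { apply Rmult_le_reg_r with (2 * tau); [lra|].
    unfold Rdiv. rewrite Rmult_assoc, Rinv_l by lra. lra. }
  assert (tau/2 - (t - t ^ 2 / (2 * tau)) = (tau - t) ^ 2 / (2 * tau)) by (field; lra).
  assert (0 <= (tau - t) ^ 2 / (2 * tau)) by (apply Rdiv_le_0_compat; nra).
  rewrite E. split; [nra|split]; [lra|nra].
Qed.

Lemma ramp_right_mono s t : 0 <= s -> s <= t -> ramp_right s <= ramp_right t.
Proof.
  intros Hs Hst. unfold ramp_right.
  destruct (Rle_dec s tau); destruct (Rle_dec t tau); try lra.
  - assert (t - t ^ 2 / (2 * tau) - (s - s ^ 2 / (2 * tau)) = (t - s) * (1 - (t + s) / (2 * tau)))
      by (field; lra).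
    assert ((t + s) / (2 * tau) <= 1).
    { apply Rmult_le_reg_r with (2 * tau); [lra|].
      unfold Rdiv. rewrite Rmult_assoc, Rinv_l by lra. lra. }
    nra.
  - assert (tau/2 - (s - s ^ 2 / (2 * tau)) = (tau - s) ^ 2 / (2 * tau)) by (field; lra).
    assert (0 <= (tau - s) ^ 2 / (2 * tau)) by (apply Rdiv_le_0_compat; nra). lra.
Qed.

Lemma Phi_right_mono x y : x <= y -> Phi_right x <= Phi_right y.
Proof.
  intros Hxy. unfold Phi_right. pose proof (base_fp x). pose proof (base_fp y).
  destruct (floor_cases x y Hxy) as [[E1 E2]|E].
  - rewrite E1. pose proof (ramp_right_mono (frac_part x) (frac_part y) ltac:(lra) ltac:(lra)). lra.
  - pose proof (ramp_right_bounds (frac_part x) ltac:(lra)).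
    pose proof (ramp_right_bounds (frac_part y) ltac:(lra)). nra.
Qed.

Lemma Phi_right_step x : h * tent_right tau (frac_part x) <= Phi_right x - Phi_right (x - h).
Proof.
  pose proof (base_fp x) as Fx. pose proof (base_fp (x - h)) as Fy.
  assert (T1 : tent_right tau (frac_part x) <= 1).
  { unfold tent_right. destruct Rle_dec; [|lra].
    assert (0 <= frac_part x / tau) by (apply Rdiv_le_0_compat; lra). lra. }
  unfold Phi_right. destruct (floor_cases (x - h) x ltac:(lra)) as [[E1 E2]|E].
  - rewrite E1. replace (frac_part (x - h)) with (frac_part x - h) by lra.
    unfold tent_right. destruct (Rle_dec (frac_part x) tau).
    + unfold ramp_right. destruct (Rle_dec (frac_part x) tau); [|lra].
      destruct (Rle_dec (frac_part x - h) tau); [|lra].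
      apply Rmult_le_reg_r with (2 * tau); [lra|].
      unfold Rdiv. field_simplify; try lra. nra.
    + rewrite Rmult_0_r.
      pose proof (ramp_right_mono (frac_part x - h) (frac_part x) ltac:(lra) ltac:(lra)). lra.
  - pose proof (ramp_right_bounds (frac_part x) ltac:(lra)).
    pose proof (ramp_right_bounds (frac_part (x - h)) ltac:(lra)). nra.
Qed.

Lemma Phi_right_growth x y : x <= y -> Phi_right y - Phi_right x <= (tau/2 + h) * (y - x + 1).
Proof.
  intros Hxy. unfold Phi_right. pose proof (base_fp x). pose proof (base_fp y).
  pose proof (ramp_right_bounds (frac_part x) ltac:(lra)).
  pose proof (ramp_right_bounds (frac_part y) ltac:(lra)).
  pose proof (fp_decomp x). pose proof (fp_decomp y). nra.
Qed.

End Tents.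

Lemma telescope (g Phi : R -> R) (th : nat -> R) (h : R) (n : nat) :
  (1 <= n)%nat ->
  (forall x y, x <= y -> Phi x <= Phi y) ->
  (forall x, h * g x <= Phi (x + h) - Phi x) ->
  (forall k, (k + 1 < n)%nat -> th k + h <= th (S k)) ->
  h * rsum (fun k => g (th k)) n <= Phi (th (n - 1)%nat + h) - Phi (th O).
Proof.
  intros Hn Hm Hs Hth. induction n as [|n IH]; [lia|].
  destruct n as [|n]; [simpl; specialize (Hs (th O)); lra|].
  specialize (IH ltac:(lia) (fun k Hk => Hth k ltac:(lia))).
  replace (S (S n) - 1)%nat with (S n) by lia. replace (S n - 1)%nat with n in IH by lia.
  change (rsum (fun k => g (th k)) (S (S n)))
    with (rsum (fun k => g (th k)) (S n) + g (th (S n))).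
  pose proof (Hs (th (S n))). pose proof (Hm _ _ (Hth n ltac:(lia))). lra.
Qed.

Lemma tent_sum tau h (th : nat -> R) n : 0 < tau -> tau <= 1 -> 0 < h -> (1 <= n)%nat ->
  (forall k, (k + 1 < n)%nat -> th k + h <= th (S k)) ->
  h * rsum (fun k => tent_left tau (frac_part (th k)) + tent_right tau (frac_part (th k))) n
  <= 2 * (tau/2 + h) * (th (n - 1)%nat - th O + h + 1).
Proof.
  intros Ht Ht1 Hh Hn Hth.
  assert (HL := telescope (fun x => tent_left tau (frac_part x)) (Phi_left tau h) th h n Hn
    (Phi_left_mono tau h Ht Ht1 Hh) (Phi_left_step tau h Ht Ht1 Hh) Hth).
  assert (HR := telescope (fun x => tent_right tau (frac_part x))
    (fun x => Phi_right tau h (x - h)) th h n Hn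
    (fun x y Hxy => Phi_right_mono tau h Ht Ht1 Hh (x - h) (y - h) ltac:(lra))
    (fun x => ltac:(cbv beta; replace (x + h - h) with x by ring;
                    apply (Phi_right_step tau h Ht Ht1 Hh x))) Hth).
  simpl in HL, HR.
  assert (Hmono : forall k, (k < n)%nat -> th O <= th k).
  { induction k as [|k IH]; intros Hk; [lra|].
    pose proof (IH ltac:(lia)). pose proof (Hth k ltac:(lia)). lra. }
  pose proof (Hmono (n - 1)%nat ltac:(lia)).
  pose proof (Phi_left_growth tau h Ht Ht1 Hh (th O) (th (n - 1)%nat + h) ltac:(lra)).
  pose proof (Phi_right_growth tau h Ht Ht1 Hh (th O - h) (th (n - 1)%nat + h - h) ltac:(lra)).
  rewrite rsum_plus. lra.
Qed.

(* Total variation of the weights along a nondecreasing sequence of increments: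
   within a unit cell the weight is antitone, so its variation there is its drop;
   across cells it changes by at most 2A.  Altogether the endpoint values plus the
   variation cost at most 4A per unit of range (plus 4A). *)
Section Variation.
Variable A : R.
Hypothesis HA : 0 <= A.
Variable th : nat -> R.
Let v k := cot_weight A (frac_part (th k)).
Let I k := IZR (Int_part (th k)).

Lemma variation_step k : th k <= th (S k) ->
  Rabs (v (S k) - v k) <= 4 * A * (I (S k) - I k) - (v (S k) - v k).
Proof.
  intros Hk. unfold v, I.
  pose proof (base_fp (th k)). pose proof (base_fp (th (S k))).
  destruct (floor_cases _ _ Hk) as [[E1 E2]|E].
  - rewrite E1.
    pose proof (cot_weight_antitone A (frac_part (th k)) (frac_part (th (S k))) HA
      ltac:(lra) ltac:(lra)).
    rewrite Rabs_left1 by lra. lra.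
  - pose proof (cot_weight_bound A (frac_part (th k)) HA) as B1.
    pose proof (cot_weight_bound A (frac_part (th (S k))) HA) as B2.
    apply Rabs_le_between in B1, B2.
    destruct (Rle_dec 0 (cot_weight A (frac_part (th (S k))) - cot_weight A (frac_part (th k)))).
    + rewrite Rabs_right by lra. nra.
    + rewrite Rabs_left by lra. nra.
Qed.

Lemma variation_sum m : (forall k, (k < m)%nat -> th k <= th (S k)) ->
  rsum (fun k => Rabs (v (S k) - v k)) m <= 4 * A * (I m - I O) - (v m - v O).
Proof.
  induction m as [|m IH]; intros H; simpl; [lra|].
  pose proof (IH (fun k Hk => H k ltac:(lia))). pose proof (variation_step m (H m ltac:(lia))). lra.
Qed.

(* The weight is nonnegative on [0, 1/2] and nonpositive on [1/2, 1), which
   controls its values at the two ends of the sequence. *)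
Lemma weight_end_bounds t : 0 <= t < 1 ->
  Rabs (cot_weight A t) + cot_weight A t <= 4 * A * (1 - t) /\
  Rabs (cot_weight A t) - cot_weight A t <= 4 * A * t.
Proof.
  intros Ht. pose proof (cot_weight_bound A t HA) as B. apply Rabs_le_between in B as B'.
  destruct (Rle_dec t (1/2)).
  - pose proof (cot_weight_nonneg A t HA ltac:(lra)). rewrite Rabs_right by lra. split; nra.
  - pose proof (cot_weight_nonpos A t HA ltac:(lra)). rewrite Rabs_left1 by lra. split; nra.
Qed.

Lemma variation_total n : (1 <= n)%nat -> (forall k, (k + 1 < n)%nat -> th k <= th (S k)) ->
  Rabs (v O) + Rabs (v (n - 1)%nat) + rsum (fun k => Rabs (v (S k) - v k)) (n - 1)
  <= 4 * A * (th (n - 1)%nat - th O + 1).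
Proof.
  intros Hn H. pose proof (variation_sum (n - 1) (fun k Hk => H k ltac:(lia))).
  pose proof (base_fp (th O)). pose proof (base_fp (th (n - 1)%nat)).
  pose proof (weight_end_bounds (frac_part (th O)) ltac:(lra)).
  pose proof (weight_end_bounds (frac_part (th (n - 1)%nat)) ltac:(lra)).
  pose proof (fp_decomp (th O)) as D0. pose proof (fp_decomp (th (n - 1)%nat)) as D1.
  unfold v, I in *.
  assert (E : 4 * A * (th (n - 1)%nat - th O + 1) =
    4 * A * (1 - frac_part (th O)) + 4 * A * frac_part (th (n - 1)%nat)
    + 4 * A * (IZR (Int_part (th (n - 1)%nat)) - IZR (Int_part (th O)))).
  { rewrite D0 at 1. rewrite D1 at 1. ring. }
  lra.
Qed.
End Variation.

Fixpoint csum (u : nat -> C) (n : nat) : C :=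
  match n with O => 0%C | S m => (csum u m + u m)%C end.

Definition e2pi (x : R) : C := (cos (2 * PI * x), sin (2 * PI * x)).

Lemma Cmod_e2pi x : Cmod (e2pi x) = 1.
Proof.
  unfold Cmod, e2pi. simpl fst; simpl snd.
  replace (cos (2 * PI * x) ^ 2 + sin (2 * PI * x) ^ 2) with 1
    by (rewrite <- (sin2_cos2 (2 * PI * x)); unfold Rsqr; ring).
  apply sqrt_1.
Qed.

Lemma Cmod_csum (u : nat -> C) n : Cmod (csum u n) <= rsum (fun k => Cmod (u k)) n.
Proof.
  induction n as [|n IH]; simpl; [rewrite Cmod_0; lra|].
  eapply Rle_trans; [apply Cmod_triangle|]. lra.
Qed.

Lemma csum_fst (u : nat -> C) n : fst (csum u n) = rsum (fun k => fst (u k)) n.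
Proof. induction n as [|n IH]; simpl; [reflexivity|]. rewrite IH. reflexivity. Qed.

Lemma csum_snd (u : nat -> C) n : snd (csum u n) = rsum (fun k => snd (u k)) n.
Proof. induction n as [|n IH]; simpl; [reflexivity|]. rewrite IH. reflexivity. Qed.

(* Replacing the phases by their negatives conjugates the sum. *)
Lemma Cmod_csum_opp (a : nat -> R) n :
  Cmod (csum (fun k => e2pi (- a k)) n) = Cmod (csum (fun k => e2pi (a k)) n).
Proof.
  replace (csum (fun k => e2pi (- a k)) n) with (Cconj (csum (fun k => e2pi (a k)) n)).
  { apply Cmod_conj. }
  induction n as [|n IH]; simpl; [apply injective_projections; simpl; ring|].
  rewrite Cplus_conj, IH. f_equal. unfold e2pi, Cconj. simpl.
  replace (2 * PI * - a n) with (- (2 * PI * a n)) by ring. rewrite cos_neg, sin_neg. reflexivity.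
Qed.

(* Abel summation with real weights v: consecutive terms are paired into
   P_k = (e(a_k) + e(a_(k+1)))/2 + i v_k (e(a_(k+1)) - e(a_k)), and the correction
   sum_k v_k (e(a_(k+1)) - e(a_k)) is summed by parts. *)
Section Abel.
Variables a v : nat -> R.
Let E k := e2pi (a k).

Let Cmod_E k : Cmod (E k) = 1.
Proof. apply Cmod_e2pi. Qed.

Definition pair_term (k : nat) : C := (/ 2 * (E k + E (S k)) + Ci * v k * (E (S k) - E k))%C.
Definition diff_term (k : nat) : C := (v k * (E (S k) - E k))%C.

Lemma abel_identity n :
  csum E (S n) = (/ 2 * (E O + E n) + csum pair_term n - Ci * csum diff_term n)%C.
Proof.
  induction n as [|n IH]; [simpl; field|].
  change (csum E (S (S n))) with (csum E (S n) + E (S n))%C. rewrite IH.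
  simpl. unfold pair_term, diff_term. field.
Qed.

(* P_k = e(midpoint) (cos(pi theta) - 2 v sin(pi theta)) with theta = a_(k+1) - a_k. *)
Lemma Cmod_pair_term k :
  Cmod (pair_term k) = Rabs (cos (PI * (a (S k) - a k)) - 2 * v k * sin (PI * (a (S k) - a k))).
Proof.
  set (b := PI * (a k + a (S k))). set (ph := PI * (a (S k) - a k)).
  replace (pair_term k) with (RtoC (cos ph - 2 * v k * sin ph) * (cos b, sin b))%C.
  { rewrite Cmod_mult, Cmod_R.
    replace (Cmod (cos b, sin b)) with 1; [ring|].
    rewrite <- (Cmod_e2pi ((a k + a (S k)) / 2)). unfold e2pi, b. do 3 f_equal; field. }
  unfold pair_term, E, e2pi.
  replace (2 * PI * a k) with (b - ph) by (unfold b, ph; ring).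
  replace (2 * PI * a (S k)) with (b + ph) by (unfold b, ph; ring).
  rewrite cos_plus, sin_plus, cos_minus, sin_minus.
  apply injective_projections; simpl; field.
Qed.

Lemma diff_sum_bound m : (1 <= m)%nat ->
  Cmod (csum diff_term m - v (m - 1)%nat * E m)%C
  <= Rabs (v O) + rsum (fun k => Rabs (v (S k) - v k)) (m - 1).
Proof.
  intros Hm. induction m as [|m IH]; [lia|].
  destruct m as [|m].
  - replace (csum diff_term 1 - v (1 - 1)%nat * E 1%nat)%C with (- (v O * E O))%C
      by (simpl; unfold diff_term; ring).
    rewrite Cmod_opp, Cmod_mult, Cmod_R. rewrite Cmod_E. simpl. lra.
  - specialize (IH ltac:(lia)).
    replace (S (S m) - 1)%nat with (S m) by lia. replace (S m - 1)%nat with m in IH by lia.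
    change (rsum (fun k => Rabs (v (S k) - v k)) (S m)) with
      (rsum (fun k => Rabs (v (S k) - v k)) m + Rabs (v (S m) - v m)).
    replace (csum diff_term (S (S m)) - v (S m) * E (S (S m)))%C
      with ((csum diff_term (S m) - v m * E (S m)) - RtoC (v (S m) - v m) * E (S m))%C
      by (rewrite RtoC_minus; simpl; unfold diff_term; ring).
    eapply Rle_trans; [apply Cmod_triangle|].
    rewrite Cmod_opp, Cmod_mult, Cmod_R, Cmod_E. lra.
Qed.

Lemma abel_bound n : (1 <= n)%nat ->
  Cmod (csum E (S n)) <= 1 + rsum (fun k => Cmod (pair_term k)) n
     + (Rabs (v O) + Rabs (v (n - 1)%nat) + rsum (fun k => Rabs (v (S k) - v k)) (n - 1)).
Proof.
  intros Hn. rewrite abel_identity.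
  replace (csum diff_term n)
    with ((csum diff_term n - v (n - 1)%nat * E n) + v (n - 1)%nat * E n)%C by ring.
  pose proof (diff_sum_bound n Hn).
  assert (Hend : Cmod (/ 2 * (E O + E n)) <= 1).
  { rewrite Cmod_mult. pose proof (Cmod_triangle (E O) (E n)). rewrite !Cmod_E in *.
    rewrite <- RtoC_inv, Cmod_R, Rabs_pos_eq by lra. lra. }
  pose proof (Cmod_csum pair_term n).
  pose proof (Cmod_triangle (/ 2 * (E O + E n)) (csum pair_term n)).
  eapply Rle_trans; [apply Cmod_triangle|].
  rewrite Cmod_opp, Cmod_mult, Cmod_Ci, Rmult_1_l.
  eapply Rle_trans; [apply Rplus_le_compat_l, Cmod_triangle|].
  rewrite Cmod_mult, Cmod_R, Cmod_E. lra.
Qed.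
End Abel.

Definition increment (a : nat -> R) (k : nat) : R := a (S k) - a k.

Lemma exp_sum_spaced (a : nat -> R) n tau h :
  (1 <= n)%nat -> 0 < tau -> tau <= 1 -> 0 < h ->
  (forall k, (k + 1 < n)%nat -> increment a k + h <= increment a (S k)) ->
  Cmod (csum (fun k => e2pi (a k)) (S n)) <=
  1 + (tau / h + 2) * (increment a (n - 1)%nat - increment a O + h + 1)
    + 2 / (PI * tau) * (increment a (n - 1)%nat - increment a O + 1).
Proof.
  intros Hn Htau Htau1 Hh Hsp. pose proof PI_RGT_0.
  set (A := / (2 * PI * tau)).
  assert (HA : 0 < A) by (apply Rinv_0_lt_compat; nra).
  set (v := fun k => cot_weight A (frac_part (increment a k))).
  set (tents := rsum (fun k => tent_left tau (frac_part (increment a k))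
                           + tent_right tau (frac_part (increment a k))) n).
  assert (Hpairs : rsum (fun k => Cmod (pair_term a v k)) n <= tents).
  { apply rsum_le. intros k _. rewrite Cmod_pair_term. apply weight_defect, Htau. }
  pose proof (tent_sum tau h (increment a) n Htau Htau1 Hh Hn Hsp) as Htents.
  pose proof (variation_total A (Rlt_le _ _ HA) (increment a) n Hn
    (fun k Hk => ltac:(pose proof (Hsp k Hk); lra))) as Hvar.
  pose proof (abel_bound a v n Hn) as Habel.
  assert (E4A : 4 * A = 2 / (PI * tau)) by (unfold A; field; lra).
  assert (tents <= (tau / h + 2) * (increment a (n - 1)%nat - increment a O + h + 1)).
  { apply Rmult_le_reg_l with h; [lra|].
    replace (h * ((tau / h + 2) * (increment a (n - 1)%nat - increment a O + h + 1)))
      with (2 * (tau / 2 + h) * (increment a (n - 1)%nat - increment a O + h + 1))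
      by (field; lra).
    exact Htents. }
  rewrite E4A in Hvar. unfold v in *. cbv beta in *. lra.
Qed.

(* The choice tau = sqrt(2/pi) / sqrt W equalizes tau W and 2/(pi tau). *)
Lemma balanced_tau W : 1 < W ->
  0 < sqrt (2 / PI) / sqrt W <= 1 /\
  sqrt (2 / PI) / sqrt W * W = sqrt (2 / PI) * sqrt W /\
  2 / (PI * (sqrt (2 / PI) / sqrt W)) = sqrt (2 / PI) * sqrt W.
Proof.
  intros HW. pose proof PI_RGT_0. pose proof PI2_3_2.
  set (s := sqrt (2 / PI)). set (r := sqrt W).
  assert (Hs2 : s * s = 2 / PI) by (apply sqrt_sqrt, Rlt_le, Rdiv_lt_0_compat; lra).
  assert (Hr2 : r * r = W) by (apply sqrt_sqrt; lra).
  assert (Hs : 0 < s) by (apply sqrt_lt_R0, Rdiv_lt_0_compat; lra).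
  assert (Hr : 0 < r) by (apply sqrt_lt_R0; lra).
  assert (Htau : 0 < s / r) by (apply Rdiv_lt_0_compat; lra).
  split; [split; [exact Htau|]|split].
  - assert (s / r * (s / r) <= 1).
    { replace (s / r * (s / r)) with ((s * s) / (r * r)) by (field; lra).
      rewrite Hs2, Hr2. apply Rmult_le_reg_r with (PI * W); [nra|].
      field_simplify; nra. }
    nra.
  - rewrite <- Hr2. field. lra.
  - replace (2 / (PI * (s / r))) with (r * (2 / PI) / s) by (field; repeat split; lra).
    rewrite <- Hs2. field. lra.
Qed.

Lemma increment_range (th : nat -> R) n lo hi :
  (forall k, (k + 1 < n)%nat -> lo <= th (S k) - th k <= hi) ->
  forall m, (m < n)%nat -> INR m * lo <= th m - th O <= INR m * hi.
Proof.
  intros H m. induction m as [|m IH]; intros Hm; [simpl; lra|].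
  pose proof (IH ltac:(lia)). pose proof (H m ltac:(lia)). rewrite S_INR. lra.
Qed.

Lemma exp_sum_second_diff (a : nat -> R) n V W : 0 < V -> V < W -> 1 < W ->
  (forall k, (k + 1 < n)%nat -> 1 / W <= a (S (S k)) - 2 * a (S k) + a k <= 1 / V) ->
  Cmod (csum (fun k => e2pi (a k)) (S n))
  <= (INR n / V + 1) * (2 * sqrt (2 / PI) * sqrt W + 2) + 1.
Proof.
  intros HV HVW HW Hd.
  pose proof (Rmult_le_pos _ _ (sqrt_pos (2 / PI)) (sqrt_pos W)) as Hsr.
  destruct n as [|m].
  - simpl. rewrite Cplus_0_l, Cmod_e2pi. unfold Rdiv. rewrite Rmult_0_l. lra.
  - set (n := S m).
    destruct (balanced_tau W HW) as [[Htau Htau1] [EW EA]].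
    assert (Hh : 0 < 1 / W) by (apply Rdiv_lt_0_compat; lra).
    assert (HhV : 1 / W <= 1 / V) by (apply Rlt_le, Rmult_lt_compat_l, Rinv_lt_contravar; nra).
    assert (Hinc : forall k, (k + 1 < n)%nat ->
                     1 / W <= increment a (S k) - increment a k <= 1 / V).
    { intros k Hk. unfold increment. pose proof (Hd k Hk). lra. }
    pose proof (exp_sum_spaced a n _ _ ltac:(lia) Htau Htau1 Hh
      (fun k Hk => ltac:(pose proof (Hinc k Hk); lra))) as Hspaced.
    replace (sqrt (2 / PI) / sqrt W / (1 / W)) with (sqrt (2 / PI) / sqrt W * W) in Hspaced
      by (pose proof (sqrt_lt_R0 W ltac:(lra)); field; split; apply Rgt_not_eq; lra).
    rewrite EW, EA in Hspaced.
    pose proof (increment_range (increment a) n _ _ Hinc (n - 1)%nat ltac:(lia)) as [_ Hrange].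
    rewrite minus_INR in Hrange by (unfold n; lia).
    assert (Hrh : increment a (n - 1)%nat - increment a O + 1 / W <= INR n / V).
    { simpl INR in Hrange at 2. unfold Rdiv in *. lra. }
    set (R0 := increment a (n - 1)%nat - increment a O) in *.
    set (sr := sqrt (2 / PI) * sqrt W) in *.
    replace (2 * sqrt (2 / PI) * sqrt W) with (2 * sr) by (unfold sr; ring).
    assert (R0 + 1 <= INR n / V + 1) by lra.
    assert (R0 + 1 / W + 1 <= INR n / V + 1) by lra.
    assert ((sr + 2) * (R0 + 1 / W + 1) <= (sr + 2) * (INR n / V + 1))
      by (apply Rmult_le_compat_l; lra).
    assert (sr * (R0 + 1) <= sr * (INR n / V + 1)) by (apply Rmult_le_compat_l; lra).
    lra.
Qed.

Lemma deriv_within_continuous (D : R -> Prop) g c l :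
  has_deriv_within D g c l -> limit1_in g D (g c) c.
Proof.
  intros H eps Heps. destruct (H 1 Rlt_0_1) as [d [Hd Hh]].
  assert (Hla : 0 < Rabs l + 1) by (pose proof (Rabs_pos l); lra).
  exists (Rmin d (eps / (Rabs l + 1))).
  split; [apply Rmin_pos; [lra|apply Rdiv_lt_0_compat; lra]|].
  intros u [Du Hu]. simpl in *. unfold R_dist in *.
  pose proof (Rmin_l d (eps / (Rabs l + 1))). pose proof (Rmin_r d (eps / (Rabs l + 1))).
  destruct (Req_dec u c) as [->|Hne]; [rewrite Rminus_diag, Rabs_R0; lra|].
  specialize (Hh (u - c) ltac:(lra) ltac:(lra) ltac:(replace (c + (u - c)) with u by ring; auto)).
  replace (c + (u - c)) with u in Hh by ring.
  assert (Hq : Rabs ((g u - g c) / (u - c)) < Rabs l + 1).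
  { pose proof (Rabs_triang_inv ((g u - g c) / (u - c)) l). lra. }
  replace (g u - g c) with ((g u - g c) / (u - c) * (u - c)) by (field; lra).
  rewrite Rabs_mult.
  apply Rle_lt_trans with ((Rabs l + 1) * Rabs (u - c)).
  { apply Rmult_le_compat_r; [apply Rabs_pos|lra]. }
  replace eps with ((Rabs l + 1) * (eps / (Rabs l + 1))) by (field; lra).
  apply Rmult_lt_compat_l; lra.
Qed.

Lemma clamp_continuous lo hi g c : lo <= hi -> lo <= c <= hi ->
  limit1_in g (Icc lo hi) (g c) c -> continuity_pt (fun u => g (clamp lo hi u)) c.
Proof.
  intros Hlh Hc H.
  unfold continuity_pt, continue_in, limit1_in, limit_in in *. intros eps Heps.
  destruct (H eps Heps) as [d [Hd Hh]]. exists d. split; auto.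
  intros y [_ Hy]. simpl in *. unfold R_dist in *.
  rewrite (clamp_id lo hi c) by lra.
  pose proof (clamp_dist lo hi y c Hc). pose proof (clamp_in lo hi y Hlh).
  destruct (Req_dec (clamp lo hi y) c) as [->|Hne]; [rewrite Rminus_diag, Rabs_R0; auto|].
  apply Hh. split; [unfold Icc|]; lra.
Qed.

Lemma clamp_is_derive lo hi g l z : lo < z < hi -> has_deriv_within (Icc lo hi) g z l ->
  is_derive (fun u => g (clamp lo hi u)) z l.
Proof.
  intros Hz H. apply is_derive_Reals. intros eps Heps.
  destruct (H eps Heps) as [d [Hd Hh]].
  assert (Hp : 0 < Rmin d (Rmin (z - lo) (hi - z))) by (repeat apply Rmin_pos; lra).
  exists (mkposreal _ Hp). intros u Hu0 Hlt. simpl in Hlt.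
  pose proof (Rmin_l d (Rmin (z - lo) (hi - z))). pose proof (Rmin_r d (Rmin (z - lo) (hi - z))).
  pose proof (Rmin_l (z - lo) (hi - z)). pose proof (Rmin_r (z - lo) (hi - z)).
  apply Rabs_def2 in Hlt as [Hl1 Hl2].
  rewrite (clamp_id lo hi (z + u)), (clamp_id lo hi z) by lra.
  apply Hh; auto; [apply Rabs_def1; lra|unfold Icc; lra].
Qed.

Lemma mvt_within lo hi g g' m M x y : lo <= x -> x <= y -> y <= hi ->
  (forall z, Icc lo hi z -> has_deriv_within (Icc lo hi) g z (g' z)) ->
  (forall z, x <= z <= y -> m <= g' z <= M) ->
  m * (y - x) <= g y - g x <= M * (y - x).
Proof.
  intros Hx Hxy Hy Hd Hb.
  destruct (Req_dec x y) as [<-|Hne]; [rewrite !Rminus_diag; lra|].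
  destruct (MVT_gen (fun u => g (clamp lo hi u)) x y g') as [c [Hc Hm]].
  - intros z Hz. rewrite Rmin_left, Rmax_right in Hz by lra.
    apply clamp_is_derive; [lra|apply Hd; unfold Icc; lra].
  - intros z Hz. rewrite Rmin_left, Rmax_right in Hz by lra.
    apply clamp_continuous; [lra|lra|]. apply deriv_within_continuous with (g' z).
    apply Hd. unfold Icc; lra.
  - rewrite Rmin_left, Rmax_right in Hc by lra.
    rewrite !clamp_id in Hm by lra. rewrite Hm.
    specialize (Hb c Hc). split; apply Rmult_le_compat_r; lra.
Qed.

Lemma step_diff_deriv lo hi f f1 x t : lo <= x -> x + 2 <= hi ->
  (forall z, Icc lo hi z -> has_deriv_within (Icc lo hi) f z (f1 z)) -> Icc x (x + 1) t ->
  has_deriv_within (Icc x (x + 1)) (fun u => f (u + 1) - f u) t (f1 (t + 1) - f1 t).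
Proof.
  intros Hx Hhi Hd Ht. unfold Icc in Ht. intros eps Heps.
  destruct (Hd (t + 1) ltac:(unfold Icc; lra) (eps / 2) ltac:(lra)) as [d1 [Hd1 H1]].
  destruct (Hd t ltac:(unfold Icc; lra) (eps / 2) ltac:(lra)) as [d2 [Hd2 H2]].
  exists (Rmin d1 d2). split; [apply Rmin_pos; auto|].
  intros u Hu0 Hu HD. unfold Icc in HD.
  pose proof (Rmin_l d1 d2). pose proof (Rmin_r d1 d2).
  specialize (H1 u Hu0 ltac:(lra) ltac:(unfold Icc; lra)).
  specialize (H2 u Hu0 ltac:(lra) ltac:(unfold Icc; lra)).
  replace (t + u + 1) with (t + 1 + u) by ring.
  replace ((f (t + 1 + u) - f (t + u) - (f (t + 1) - f t)) / u - (f1 (t + 1) - f1 t))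
    with (((f (t + 1 + u) - f (t + 1)) / u - f1 (t + 1)) - ((f (t + u) - f t) / u - f1 t))
    by (field; lra).
  eapply Rle_lt_trans; [apply Rabs_triang|]. rewrite Rabs_Ropp. lra.
Qed.

(* Bounds on f'' bound the second differences f(x+2) - 2 f(x+1) + f(x):
   the mean value inequality applied twice. *)
Lemma second_diff_bound lo hi f f1 f2 m M x : lo <= x -> x + 2 <= hi ->
  (forall z, Icc lo hi z -> has_deriv_within (Icc lo hi) f z (f1 z)) ->
  (forall z, Icc lo hi z -> has_deriv_within (Icc lo hi) f1 z (f2 z)) ->
  (forall z, Icc lo hi z -> m <= f2 z <= M) ->
  m <= f (x + 2) - 2 * f (x + 1) + f x <= M.
Proof.
  intros Hx Hhi Hd1 Hd2 Hb.
  assert (Hg : forall t, x <= t <= x + 1 -> m <= f1 (t + 1) - f1 t <= M).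
  { intros t Ht.
    pose proof (mvt_within lo hi f1 f2 m M t (t + 1) ltac:(lra) ltac:(lra) ltac:(lra) Hd2
      (fun z Hz => Hb z ltac:(unfold Icc; lra))). lra. }
  pose proof (mvt_within x (x + 1) (fun u => f (u + 1) - f u) (fun t => f1 (t + 1) - f1 t)
    m M x (x + 1) ltac:(lra) ltac:(lra) ltac:(lra)
    (fun t Ht => step_diff_deriv lo hi f f1 x t Hx Hhi Hd1 Ht) Hg) as Hmvt.
  simpl in Hmvt. replace (x + 1 + 1) with (x + 2) in Hmvt by ring. lra.
Qed.

(* A function continuous and nowhere zero on [lo, hi] has constant sign there
   (intermediate value theorem). *)
Lemma sign_constant lo hi g : lo <= hi ->
  (forall x, Icc lo hi x -> limit1_in g (Icc lo hi) (g x) x) ->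
  (forall x, Icc lo hi x -> g x <> 0) ->
  (forall x, Icc lo hi x -> 0 < g x) \/ (forall x, Icc lo hi x -> g x < 0).
Proof.
  intros Hlh Hc Hnz.
  assert (Hct : forall x, lo <= x <= hi -> continuity_pt (fun u => g (clamp lo hi u)) x)
    by (intros x Hx; apply clamp_continuous; auto).
  assert (Hcross : forall x y, Icc lo hi x -> Icc lo hi y -> 0 < g x -> g y < 0 -> False).
  { intros x y Hx Hy Hgx Hgy. unfold Icc in *.
    destruct (Rtotal_order x y) as [Hlt|[Heq|Hgt]]; [| subst; lra |].
    - destruct (Ranalysis5.IVT_interv (fun u => - g (clamp lo hi u)) x y) as [z [Hz Hz0]];
        try (rewrite clamp_id by lra); try lra.
      + intros u Hu. apply continuity_pt_opp, Hct. lra.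
      + rewrite clamp_id in Hz0 by lra. apply (Hnz z); [unfold Icc|]; lra.
    - destruct (Ranalysis5.IVT_interv (fun u => g (clamp lo hi u)) y x) as [z [Hz Hz0]];
        try (rewrite clamp_id by lra); try lra.
      + intros u Hu. apply Hct. lra.
      + rewrite clamp_id in Hz0 by lra. apply (Hnz z); [unfold Icc|]; lra. }
  assert (Hlo : Icc lo hi lo) by (unfold Icc; lra).
  destruct (Rtotal_order (g lo) 0) as [Hn|[Hz|Hp]].
  - right. intros x Hx. destruct (Rtotal_order (g x) 0) as [H1|[H1|H1]]; auto.
    + exfalso; exact (Hnz x Hx H1).
    + exfalso; exact (Hcross x lo Hx Hlo H1 Hn).
  - exfalso; exact (Hnz lo Hlo Hz).
  - left. intros x Hx. destruct (Rtotal_order (g x) 0) as [H1|[H1|H1]]; auto.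
    + exfalso; exact (Hcross lo x Hlo Hx Hp H1).
    + exfalso; exact (Hnz x Hx H1).
Qed.

Lemma exp_sum_abs_csum f N n :
  exp_sum_abs f N (S n) = Cmod (csum (fun k => e2pi (f (IZR N + 1 + INR k))) (S n)).
Proof.
  unfold exp_sum_abs, cmod, Cmod. rewrite csum_fst, csum_snd, !rsum_sum_f_R0.
  replace (S n - 1)%nat with n by lia. reflexivity.
Qed.

Lemma sample_second_diff (N : Z) n f f1 f2 m M :
  (forall z, Icc (IZR N + 1) (IZR N + INR (S n)) z ->
     has_deriv_within (Icc (IZR N + 1) (IZR N + INR (S n))) f z (f1 z)) ->
  (forall z, Icc (IZR N + 1) (IZR N + INR (S n)) z ->
     has_deriv_within (Icc (IZR N + 1) (IZR N + INR (S n))) f1 z (f2 z)) ->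
  (forall z, Icc (IZR N + 1) (IZR N + INR (S n)) z -> m <= f2 z <= M) ->
  forall k, (k + 1 < n)%nat ->
  m <= f (IZR N + 1 + INR (S (S k))) - 2 * f (IZR N + 1 + INR (S k)) + f (IZR N + 1 + INR k) <= M.
Proof.
  intros Hd1 Hd2 Hb k Hk.
  assert (Hk3 : INR k + 2 <= INR n) by (replace 2 with (INR 2) by reflexivity;
    rewrite <- plus_INR; apply le_INR; lia).
  pose proof (pos_INR k). rewrite !S_INR.
  replace (IZR N + 1 + (INR k + 1 + 1)) with (IZR N + 1 + INR k + 2) by ring.
  replace (IZR N + 1 + (INR k + 1)) with (IZR N + 1 + INR k + 1) by ring.
  apply (second_diff_bound (IZR N + 1) (IZR N + INR (S n)) f f1 f2); auto;
    [lra|rewrite S_INR; lra].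
Qed.

(* The hypothesis 0 < 1/W <= |f''| <= 1/V forces V > 0. *)
Lemma pos_of_inv_bound V x : 0 < x -> x <= 1 / V -> 0 < V.
Proof.
  intros Hx HxV. destruct (Rtotal_order V 0) as [Hv|[Hv|Hv]]; auto.
  - assert (1 / V < 0) by (unfold Rdiv; rewrite Rmult_1_l; apply Rinv_lt_0_compat; auto). lra.
  - subst. unfold Rdiv in HxV. rewrite Rinv_0, Rmult_0_r in HxV. lra.
Qed.

Theorem lemma1 (N : Z) (L : nat) (f f1 f2 : R -> R) (V W : R) :
  (0 < L)%nat ->
  C2_on (IZR N + 1) (IZR N + INR L) f f1 f2 ->
  V < W -> 1 < W ->
  (forall x, IZR N + 1 <= x <= IZR N + INR L ->
     1 / W <= Rabs (f2 x) <= 1 / V) ->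
  exp_sum_abs f N L <=
    ((INR L - 1) / V + 1) * (2 * sqrt (2 / PI) * sqrt W + 2) + 1.
Proof.
  intros HL [Hd1 [Hd2 Hcont]] HVW HW Hb.
  destruct L as [|n]; [lia|].
  replace (INR (S n) - 1) with (INR n) by (rewrite S_INR; ring).
  rewrite exp_sum_abs_csum.
  assert (HW0 : 0 < 1 / W) by (apply Rdiv_lt_0_compat; lra).
  assert (Hlohi : IZR N + 1 <= IZR N + INR (S n)) by (rewrite S_INR; pose proof (pos_INR n); lra).
  assert (Hbnd : Icc (IZR N + 1) (IZR N + INR (S n)) (IZR N + 1)) by (unfold Icc; lra).
  assert (HV : 0 < V) by (destruct (Hb _ Hbnd); eapply pos_of_inv_bound; eauto; lra).
  (* f'' does not vanish, hence has constant sign: f is convex or concave. *)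
  destruct (sign_constant _ _ f2 Hlohi Hcont
    (fun x Hx Hz => ltac:(pose proof (Hb x Hx); rewrite Hz, Rabs_R0 in *; lra))) as [Hpos|Hneg].
  - apply exp_sum_second_diff; auto.
    apply (sample_second_diff N n f f1 f2); auto.
    intros z Hz. specialize (Hb z Hz).
    rewrite Rabs_right in Hb by (pose proof (Hpos z Hz); lra). exact Hb.
  - (* For concave f pass to -f, which conjugates the sum. *)
    rewrite <- Cmod_csum_opp. apply exp_sum_second_diff; auto.
    intros k Hk.
    enough (- (1 / V) <= f (IZR N + 1 + INR (S (S k))) - 2 * f (IZR N + 1 + INR (S k))
                          + f (IZR N + 1 + INR k) <= - (1 / W)) by lra.
    apply (sample_second_diff N n f f1 f2); auto.
    intros z Hz. specialize (Hb z Hz). rewrite Rabs_left in Hb by (apply Hneg; auto). lra.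
Qed.
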